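(* Let $G$ be a finite-horizon two-player zero-sum sequential game with horizon $T$, let $\epsilon>0$ and $\alpha>0$, and let $\rho$ be a reference policy with $\rho(h_\iota)(a)\ge\epsilon$ for every AOH $h_\iota$ and every action $a\in\mathbb A$. Let $\mathfrak J$ be the MiniMaxKL objective with reference policy $\rho$ and regularization parameter $\alpha$, and let $\pi^\ast$ be the equilibrium of $G$ under $\mathfrak J$. Then the (unregularized) exploitability of $\pi^\ast$ satisfies $\text{expl}(\pi^\ast)\le\alpha T|\log\epsilon|$.
   Context: A finite-horizon two-player zero-sum sequential game consists of: players $i\in\{0,1\}$; a finite action set $\mathbb{A}$; a set of histories $\mathbb{H}$, at each of which exactly one player $\iota$ acts; each history $h$ determines each player's action-observation history (AOH) $h_i$ (perfect recall); an initial history distribution; a reward $\mathcal{R}:\mathbb{H}\times\mathbb{A}\to\mathbb{R}$ (player 0 gets $\mathcal R$, player 1 gets $-\mathcal R$); a transition function $\mathcal{T}:\mathbb{H}\times\mathbb{A}\to\Delta(\mathbb{H})$; and a horizon $T$. $h_\iota$ denotes the acting player's AOH at $h$. A policy of $i$ maps its AOHs to $\Delta(\mathbb A)$; a reference policy $\rho$ maps every AOH to a distribution over $\mathbb A$. The MiniMaxKL objective is $\mathfrak{J}(\pi_0,\pi_1)=\mathbb{E}[\sum_{t=0}^{T-1}\mathfrak{R}(H^t,A^t,\pi(H^t_\iota))\mid\pi_0,\pi_1]$ with $\mathfrak R(h,a,\delta)=\mathcal R(h,a)-\alpha\,\mathrm{KL}(\delta,\rho(h_\iota))$ if player 0 acts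 at $h$ and $\mathfrak R(h,a,\delta)=\mathcal R(h,a)+\alpha\,\mathrm{KL}(\delta,\rho(h_\iota))$ if player 1 acts, where $\pi(H^t_\iota)$ is the acting player's action distribution; player 0 maximizes and player 1 minimizes, and an equilibrium is a saddle point of $\mathfrak J$. The unregularized objective is $\mathcal J(\pi_0,\pi_1)=\mathbb{E}[\sum_{t=0}^{T-1}\mathcal R(H^t,A^t)\mid\pi_0,\pi_1]$, and the exploitability of $\pi=(\pi_0,\pi_1)$ is $\text{expl}(\pi)=\frac12\big(-\min_{\pi_1'}\mathcal J(\pi_0,\pi_1')+\max_{\pi_0'}\mathcal J(\pi_0',\pi_1)\big)$. *)

From HB Require Import structures.
From mathcomp Require Import all_boot all_order all_algebra.
From mathcomp Require Import all_classical all_reals all_analysis.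
Set Implicit Arguments. Unset Strict Implicit. Unset Printing Implicit Defensive.
Import Order.TTheory GRing.Theory Num.Theory.
Local Open Scope classical_set_scope.
Local Open Scope ring_scope.

(** A finite two-player zero-sum sequential game (without horizon).
    Players are booleans: [false] = player 0 (maximizer),
    [true] = player 1 (minimizer). *)
Record game (R : realType) := Game {
  hist : finType;
  act : finType;
  aoh_t : finType;
  actor : hist -> bool;
  aoh : bool -> hist -> aoh_t;
  init : hist -> R;
  rew : hist -> act -> R;             (* reward R(h,a) for player 0 *)
  trans : hist -> act -> hist -> R
}.

Arguments actor {R} g _.
Arguments aoh {R} g _ _.
Arguments init {R} g _.
Arguments rew {R} g _ _.
Arguments trans {R} g _ _ _.

Section Game.
Variables (R : realType) (G : game R).

Definition is_dist (T : finType) (p : T -> R) : Prop :=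
  (forall x, 0 <= p x) /\ \sum_(x : T) p x = 1.

Definition wf_game : Prop :=
  is_dist (init G) /\ forall h a, is_dist (trans G h a).

Definition policy := aoh_t G -> act G -> R.
Definition is_policy (pi : policy) : Prop := forall o, is_dist (pi o).

Definition pi_at (pi0 pi1 : policy) (h : hist G) : act G -> R :=
  (if actor G h then pi1 else pi0) (aoh G (actor G h) h).

Fixpoint hist_dist (pi0 pi1 : policy) (t : nat) : hist G -> R :=
  match t with
  | 0 => init G
  | t'.+1 => fun h' => \sum_(h : hist G) \sum_(a : act G)
        hist_dist pi0 pi1 t' h * pi_at pi0 pi1 h a * trans G h a h'
  end.

Definition expected_return (T : nat) (r : hist G -> act G -> (act G -> R) -> R)
    (pi0 pi1 : policy) : R :=
  \sum_(t < T) \sum_(h : hist G) \sum_(a : act G)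
     hist_dist pi0 pi1 t h * pi_at pi0 pi1 h a * r h a (pi_at pi0 pi1 h).

Definition KL (d q : act G -> R) : R :=
  \sum_(a : act G) (if d a == 0 then 0 else d a * ln (d a / q a)).

Definition reg_reward (alpha : R) (rho : policy)
    (h : hist G) (a : act G) (d : act G -> R) : R :=
  if actor G h then rew G h a + alpha * KL d (rho (aoh G (actor G h) h))
  else rew G h a - alpha * KL d (rho (aoh G (actor G h) h)).

Definition J_reg (T : nat) (alpha : R) (rho : policy) (pi0 pi1 : policy) : R :=
  expected_return T (reg_reward alpha rho) pi0 pi1.

Definition J_unreg (T : nat) (pi0 pi1 : policy) : R :=
  expected_return T (fun h a _ => rew G h a) pi0 pi1.

Definition is_equilibrium (T : nat) (alpha : R) (rho : policy)
    (pi0 pi1 : policy) : Prop :=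
  is_policy pi0 /\ is_policy pi1 /\
  forall p0 p1, is_policy p0 -> is_policy p1 ->
    J_reg T alpha rho p0 pi1 <= J_reg T alpha rho pi0 pi1 /\
    J_reg T alpha rho pi0 pi1 <= J_reg T alpha rho pi0 p1.

Definition exploitability (T : nat) (pi0 pi1 : policy) : \bar R :=
  ((ereal_sup [set (J_unreg T p0 pi1)%:E | p0 in [set p | is_policy p]]
    - ereal_inf [set (J_unreg T pi0 p1)%:E | p1 in [set p | is_policy p]])
   * (2^-1)%:E)%E.

End Game.

From HB Require Import structures.
From mathcomp Require Import all_boot all_order all_algebra.
From mathcomp Require Import all_classical all_reals all_analysis.
From mathcomp Require Import lra.
Set Implicit Arguments. Unset Strict Implicit. Unset Printing Implicit Defensive.
Import Order.TTheory GRing.Theory Num.Theory.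
Local Open Scope ring_scope.

(** If every action has reference probability at least [eps], then the KL
    divergence of any action distribution from the reference lies in
    [[0, -ln eps]].  Hence at every step the regularized and unregularized
    rewards differ by at most [alpha |ln eps|], and over the horizon the two
    objectives differ by at most [U := alpha T |ln eps|] for every policy
    pair.  A saddle point of the regularized objective, with value [c], is
    therefore a [U]-saddle point of the unregularized one: no deviation of
    player 0 earns more than [c + U] and no deviation of player 1 pushes
    the value below [c - U], so the exploitability is at most
    [((c + U) - (c - U)) / 2 = U]. *)

Section RealFacts.
Variable R : realType.

Lemma sub_le_mul_ln_div (x y : R) : 0 < x -> 0 < y -> x - y <= x * ln (x / y).
Proof.
move=> x0 y0.
have ln_le : ln (y / x) <= y / x - 1.
  have yx0 : 0 < y / x by rewrite divr_gt0.
  by have := @le_ln1Dx R (y / x - 1); rewrite addrCA subrr addr0; apply; lra.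
rewrite -invf_div lnV ?posrE ?divr_gt0 // mulrN lerNr opprB.
apply: le_trans (ler_wpM2l (ltW x0) ln_le) _.
by rewrite mulrBr mulr1 mulrCA divff ?mulr1 ?gt_eqF.
Qed.

Lemma mul_ln_div_le (x y e : R) : 0 < x <= 1 -> 0 < e <= y ->
  x * ln (x / y) <= x * - ln e.
Proof.
move=> /andP[x0 x1] /andP[e0 ey]; have y0 := lt_le_trans e0 ey.
rewrite ler_wpM2l ?(ltW x0) // -lnV ?posrE // ler_ln ?posrE ?divr_gt0 ?invr_gt0 //.
apply: le_trans (_ : 1 / y <= _); first by rewrite ler_wpM2r ?invr_ge0 ?(ltW y0).
by rewrite mul1r lef_pV2 ?posrE.
Qed.

Lemma is_dist_le1 (T : finType) (p : T -> R) x : is_dist p -> p x <= 1.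
Proof. by case=> p0 <-; rewrite (bigD1 x) //= lerDl sumr_ge0. Qed.

End RealFacts.

Section Game.
Variables (R : realType) (G : game R).
Implicit Types (d q : act G -> R) (r : hist G -> act G -> (act G -> R) -> R).

Lemma KL_ge0 d q : is_dist d -> is_dist q -> (forall a, 0 < q a) -> 0 <= KL d q.
Proof.
move=> [d0 d1] [_ q1] q0.
rewrite -(subrr 1) -{1}d1 -q1 -sumrB; apply: ler_sum => a _.
have [->|da0] := eqVneq (d a) 0; first by rewrite sub0r oppr_le0 ltW.
by apply: sub_le_mul_ln_div; rewrite // lt_def da0 d0.
Qed.

Lemma KL_le_ln d q eps : 0 < eps -> is_dist d -> (forall a, eps <= q a) ->
  KL d q <= - ln eps.
Proof.
move=> e0 dd qe; have [d0 d1] := dd.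
rewrite -[X in _ <= X]mul1r -d1 mulr_suml; apply: ler_sum => a _.
have [->|da0] := eqVneq (d a) 0; first by rewrite mul0r.
by apply: mul_ln_div_le; rewrite ?e0 ?qe ?is_dist_le1 // lt_def da0 d0.
Qed.

Lemma normr_rew_sub_reg_reward alpha rho h a d :
  `|rew G h a - reg_reward alpha rho h a d|
    = `|alpha * KL d (rho (aoh G (actor G h) h))|.
Proof.
by rewrite /reg_reward; case: actor; rewrite ?opprD ?opprB addrA ?subrr ?subrK
  ?sub0r ?normrN // addrC subrK.
Qed.

Lemma is_dist_pi_at (p0 p1 : policy G) h : is_policy p0 -> is_policy p1 ->
  is_dist (pi_at p0 p1 h).
Proof. by rewrite /pi_at => H0 H1; case: actor. Qed.

Lemma is_dist_hist_dist (p0 p1 : policy G) t :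
  wf_game G -> is_policy p0 -> is_policy p1 -> is_dist (hist_dist p0 p1 t).
Proof.
move=> [Hi Ht] H0 H1; elim: t => [|t [IH0 IH1]] //=; split.
- move=> h'; apply: sumr_ge0 => h _; apply: sumr_ge0 => a _.
  have [pa0 _] := is_dist_pi_at h H0 H1; have [tr0 _] := Ht h a.
  by rewrite !mulr_ge0.
- rewrite exchange_big -[RHS]IH1; apply: eq_bigr => h _.
  rewrite exchange_big -[RHS]mulr1 -(is_dist_pi_at h H0 H1).2 mulr_sumr.
  by apply: eq_bigr => a _; rewrite -mulr_sumr (Ht h a).2 mulr1.
Qed.

Lemma expected_returnB T r r' (p0 p1 : policy G) :
  expected_return T r p0 p1 - expected_return T r' p0 p1
  = expected_return T (fun h a d => r h a d - r' h a d) p0 p1.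
Proof.
rewrite -sumrB; apply: eq_bigr => t _; rewrite -sumrB; apply: eq_bigr => h _.
by rewrite -sumrB; apply: eq_bigr => a _; rewrite mulrBr.
Qed.

Lemma normr_expected_return_le T r (p0 p1 : policy G) c :
  wf_game G -> is_policy p0 -> is_policy p1 ->
  (forall h a, `|r h a (pi_at p0 p1 h)| <= c) ->
  `|expected_return T r p0 p1| <= T%:R * c.
Proof.
move=> wf H0 H1 rc; rewrite mulr_natl -[T in c *+ T]card_ord -sumr_const.
apply: le_trans (ler_norm_sum _ _ _) _; apply: ler_sum => t _.
have [ht0 ht1] := is_dist_hist_dist t wf H0 H1.
rewrite -[c]mul1r -{1}ht1 mulr_suml; apply: le_trans (ler_norm_sum _ _ _) _.
apply: ler_sum => h _; have [pa0 pa1] := is_dist_pi_at h H0 H1.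
rewrite -[c]mul1r -pa1 mulr_suml mulr_sumr; apply: le_trans (ler_norm_sum _ _ _) _.
apply: ler_sum => a _; rewrite normrM ger0_norm ?mulr_ge0 // mulrA.
by rewrite ler_wpM2l ?mulr_ge0.
Qed.

Lemma normr_J_unreg_sub_J_reg T eps alpha rho (p0 p1 : policy G) :
  wf_game G -> 0 < eps -> 0 <= alpha -> is_policy rho ->
  (forall h a, eps <= rho (aoh G (actor G h) h) a) ->
  is_policy p0 -> is_policy p1 ->
  `|J_unreg T p0 p1 - J_reg T alpha rho p0 p1| <= alpha * T%:R * `|ln eps|.
Proof.
move=> wf e0 a0 Hrho He H0 H1.
rewrite -mulrA mulrCA /J_unreg /J_reg expected_returnB.
apply: normr_expected_return_le => // h a.
have dd := is_dist_pi_at h H0 H1.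
have q0 a' : 0 < rho (aoh G (actor G h) h) a' := lt_le_trans e0 (He h a').
rewrite normr_rew_sub_reg_reward normrM ger0_norm // ler_wpM2l //.
rewrite ger0_norm; last exact: KL_ge0 dd (Hrho _) q0.
by apply: le_trans (KL_le_ln e0 dd (He h)) _; rewrite -normrN ler_norm.
Qed.

Lemma exploitability_le T (pi0 pi1 : policy G) c U :
  (forall p0, is_policy p0 -> J_unreg T p0 pi1 <= c + U) ->
  (forall p1, is_policy p1 -> c - U <= J_unreg T pi0 p1) ->
  (exploitability T pi0 pi1 <= U%:E)%E.
Proof.
move=> best0 best1.
have sup_le : (ereal_sup [set (J_unreg T p0 pi1)%:E | p0 in [set p | is_policy p]]
               <= (c + U)%:E)%E.
  by apply: ge_ereal_sup => _ [p Hp <-]; rewrite lee_fin best0.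
have inf_ge : ((c - U)%:E
               <= ereal_inf [set (J_unreg T pi0 p1)%:E | p1 in [set p | is_policy p]])%E.
  by apply: le_ereal_inf_tmp => _ [p Hp <-]; rewrite lee_fin best1.
apply: le_trans (lee_wpmul2r _ (leeB sup_le inf_ge)) _; first by rewrite lee_fin.
by rewrite -EFinB -EFinM lee_fin; lra.
Qed.

End Game.

Theorem proposition5p13 (R : realType) (G : game R) (T : nat)
    (eps alpha : R) (rho : policy G) (pi0 pi1 : policy G) :
  wf_game G -> 0 < eps -> 0 < alpha -> is_policy rho ->
  (forall (h : hist G) (a : act G), eps <= rho (aoh G (actor G h) h) a) ->
  is_equilibrium T alpha rho pi0 pi1 ->
  (exploitability T pi0 pi1 <= (alpha * T%:R * `|ln eps|)%:E)%E.
Proof.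
move=> wf e0 a0 Hrho He [H0 [H1 saddle]].
set U := alpha * T%:R * `|ln eps|.
have close p0 p1 : is_policy p0 -> is_policy p1 ->
    `|J_unreg T p0 p1 - J_reg T alpha rho p0 p1| <= U.
  by move=> Hp0 Hp1; apply: normr_J_unreg_sub_J_reg => //; exact: ltW.
apply: (exploitability_le (c := J_reg T alpha rho pi0 pi1)) => [p0 Hp0 | p1 Hp1].
- have /(le_trans (ler_norm _)) := close _ _ Hp0 H1.
  by have [+ _] := saddle _ _ Hp0 H1; lra.
- have := close _ _ H0 Hp1; rewrite -normrN opprB => /(le_trans (ler_norm _)).
  by have [_ +] := saddle _ _ H0 Hp1; lra.
Qed.
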